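(* Let $n\ge2$ and let $\mathcal{A}$ be a complex algebra with basis $e_1,\dots,e_{n+1}$ whose structure constants satisfy ( * ), such that $\operatorname{Ann}\mathcal{A}=\langle e_{n+1}\rangle$, $e_1e_n=0$ and $e_i^2=e_{i+1}$ for all $1\le i\le n$. Suppose that the automorphisms of $\mathcal{A}/\langle e_{n+1}\rangle$ are exactly the linear maps $\bar e_1\mapsto\bar e_1+x\bar e_n$, $\bar e_i\mapsto\bar e_i$ ($2\le i\le n$), $x\in\mathbb{C}$, where $\bar e_i=e_i+\langle e_{n+1}\rangle$. Then the automorphisms of $\mathcal{A}$ are exactly the linear maps $e_1\mapsto e_1+xe_{n+1}$, $e_i\mapsto e_i$ ($2\le i\le n+1$), $x\in\mathbb{C}$.
   Context: Structure constants: $e_ie_j=\sum_kc_{ij}^ke_k$. Condition ( * ): $c_{ij}^k=0$ whenever $k\le\max\{i,j\}$. $\operatorname{Ann}\mathcal{A}=\{a\in\mathcal{A}: a\mathcal{A}+\mathcal{A}a=0\}$. *)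

From HB Require Import structures.
From mathcomp Require Import all_boot all_order all_algebra.
From mathcomp Require Import complex Rstruct.
From Stdlib Require Rdefinitions.
Set Implicit Arguments. Unset Strict Implicit. Unset Printing Implicit Defensive.
Import Order.TTheory GRing.Theory Num.Theory.
Local Open Scope ring_scope.
Local Open Scope nat_scope.
Local Open Scope ring_scope.

Definition C : fieldType := complex Rdefinitions.R.

(* Elements of an m-dimensional algebra = coordinate row vectors in C^m.
   Basis vectors are indexed 1..m as in the paper: e_k = vec m k. *)
Definition vec (m k : nat) : 'rV[C]_m := \row_(j < m) (if j.+1 == k then 1 else 0).

(* Product determined by structure constants c (1-based):
   e_i e_j = \sum_k c i j k e_k. *)
Definition amul (m : nat) (c : nat -> nat -> nat -> C) (u v : 'rV[C]_m) : 'rV[C]_m :=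
  \row_(k < m) \sum_(i < m) \sum_(j < m) u 0 i * v 0 j * c i.+1 j.+1 k.+1.

Definition cond_star (m : nat) (c : nat -> nat -> nat -> C) : Prop :=
  forall i j k : nat, (1 <= i)%N -> (i <= m)%N -> (1 <= j)%N -> (j <= m)%N -> (1 <= k)%N -> (k <= m)%N ->
    (k <= maxn i j)%N -> c i j k = 0.

Definition in_Ann (m : nat) (c : nat -> nat -> nat -> C) (a : 'rV[C]_m) : Prop :=
  forall b, amul c a b = 0 /\ amul c b a = 0.

Definition is_aut (m : nat) (c : nat -> nat -> nat -> C) (A : 'M[C]_m) : Prop :=
  A \in unitmx /\ forall u v, amul c (u *m A) (v *m A) = amul c u v *m A.

(* An automorphism preserves the annihilator, so it stabilises the line
   <e_(n+1)>, and so does its inverse; by ( * ) the truncation to the first n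
   coordinates is multiplicative, hence the upper-left n x n block of the matrix
   is an automorphism of the quotient A/<e_(n+1)>.  The known automorphisms of
   the quotient then give e_1 |-> e_1 + x e_n + y e_(n+1) and
   e_k |-> e_k + z_k e_(n+1).  Applying the automorphism to e_1 e_n = 0 forces
   x = 0, and since e_(n+1) annihilates everything, e_(k+1) = e_k^2 is mapped
   to (e_k + z e_(n+1))^2 = e_k^2 = e_(k+1).  Conversely,
   the "shear" w |-> w + w_1 x e_(n+1) is an automorphism because by ( * )
   products have no e_1-component and e_(n+1) annihilates everything. *)
From mathcomp Require Import all_boot all_order all_algebra.
From mathcomp Require Import zify.
Set Implicit Arguments. Unset Strict Implicit. Unset Printing Implicit Defensive.
Import Order.TTheory GRing.Theory Num.Theory.
Local Open Scope ring_scope.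

Section AlgebraBasics.
Variables (m : nat) (c : nat -> nat -> nat -> C).
Implicit Types (u v w a b : 'rV[C]_m) (A : 'M[C]_m).

Lemma amulDl u v w : amul c (u + v) w = amul c u w + amul c v w.
Proof.
apply/rowP => k; rewrite !mxE -big_split; apply: eq_bigr => i _.
by rewrite -big_split; apply: eq_bigr => j _; rewrite !mxE !mulrDl.
Qed.

Lemma amulDr u v w : amul c w (u + v) = amul c w u + amul c w v.
Proof.
apply/rowP => k; rewrite !mxE -big_split; apply: eq_bigr => i _.
by rewrite -big_split; apply: eq_bigr => j _; rewrite !mxE mulrDr !mulrDl.
Qed.

Lemma amulZl t u w : amul c (t *: u) w = t *: amul c u w.
Proof.
apply/rowP => k; rewrite !mxE mulr_sumr; apply: eq_bigr => i _.
by rewrite mulr_sumr; apply: eq_bigr => j _; rewrite !mxE !mulrA.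
Qed.

Lemma amulZr t u w : amul c w (t *: u) = t *: amul c w u.
Proof.
apply/rowP => k; rewrite !mxE mulr_sumr; apply: eq_bigr => i _.
by rewrite mulr_sumr; apply: eq_bigr => j _; rewrite !mxE mulrA (mulrC _ t) !mulrA.
Qed.

Lemma in_AnnZ t a : in_Ann c a -> in_Ann c (t *: a).
Proof. by move=> Ha b; rewrite amulZl amulZr (Ha b).1 (Ha b).2 scaler0. Qed.

Lemma amul_Ann_shift u v a b : in_Ann c a -> in_Ann c b ->
  amul c (u + a) (v + b) = amul c u v.
Proof.
move=> Ha Hb; rewrite !amulDl !amulDr (Ha v).1 (Ha b).1 (Hb u).2.
by rewrite !addr0.
Qed.

Lemma aut_Ann A a : is_aut c A -> in_Ann c a -> in_Ann c (a *m A).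
Proof.
case=> Aunit Amul Ha b; rewrite -[b](mulmxKV Aunit) !Amul.
by rewrite (Ha _).1 (Ha _).2 !mul0mx.
Qed.

Lemma aut_inv A : is_aut c A -> is_aut c (invmx A).
Proof.
case=> Aunit Amul; split; first by rewrite unitmx_inv.
have Afree : row_free A by rewrite row_free_unit.
by move=> u v; apply: (row_free_inj Afree); rewrite -Amul !mulmxKV.
Qed.

End AlgebraBasics.

Lemma vecE m (i : 'I_m) : vec m i.+1 = 'e_i.
Proof. by apply/rowP => j; rewrite !mxE eqSS eqxx /= val_eqE; case: (j == i). Qed.

Lemma vec_mul m (i : 'I_m) (A : 'M[C]_m) : vec m i.+1 *m A = row i A.
Proof. by rewrite vecE rowE. Qed.

Section Shear.
Variables (m : nat) (c : nat -> nat -> nat -> C).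
Hypothesis cs : cond_star m.+1 c.
Implicit Types (u v w a : 'rV[C]_m.+1) (A : 'M[C]_m.+1).

(* By ( * ), no product has a component along e_1. *)
Lemma amul_coord0 u v : amul c u v 0 0 = 0.
Proof.
rewrite mxE big1 // => i _; rewrite big1 // => j _.
by rewrite cs ?mulr0 //=; lia.
Qed.

Lemma shear_action A a :
  'e_0 *m A = 'e_0 + a :> 'rV_m.+1 ->
  (forall i : 'I_m.+1, i != 0 -> 'e_i *m A = 'e_i :> 'rV_m.+1) ->
  forall w, w *m A = w + w 0 0 *: a.
Proof.
move=> A0 Ai w; rewrite {1 2}[w]row_sum_delta mulmx_suml !big_ord_recl /=.
under eq_bigr => i _ do rewrite -scalemxAl Ai ?(eq_sym _ 0) ?neq_lift //.
by rewrite -scalemxAl A0 scalerDr addrAC.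
Qed.

Lemma shear_aut A a : in_Ann c a -> a 0 0 = 0 ->
  (forall w, w *m A = w + w 0 0 *: a) -> is_aut c A.
Proof.
move=> Ha a00 hA; split.
  rewrite -row_free_unit; apply: inj_row_free => w; rewrite hA => w0.
  have w00 : w 0 0 = 0.
    by have := congr1 (fun r : 'rV_m.+1 => r 0 0) w0; rewrite !mxE a00 mulr0 addr0.
  by move: w0; rewrite w00 scale0r addr0.
move=> u v; rewrite !hA amul_coord0 scale0r addr0.
by rewrite amul_Ann_shift //; apply: in_AnnZ.
Qed.

End Shear.

(* Passing to the quotient by <e_(n+1)>: rows are truncated to their first n
   coordinates and matrices to their upper-left n x n block. *)
Section Quotient.
Variables (n : nat) (c : nat -> nat -> nat -> C).
Hypothesis cs : cond_star n.+1 c.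

Local Notation wid := (widen_ord (leqnSn n)).
Local Notation en := (vec n.+1 n.+1).

Definition res (w : 'rV[C]_n.+1) : 'rV[C]_n := \row_(j < n) w 0 (wid j).

Definition blk (A : 'M[C]_n.+1) : 'M[C]_n := \matrix_(i < n, j < n) A (wid i) (wid j).

Lemma big_ord_recr0 m (F : 'I_m.+1 -> C) : F ord_max = 0 ->
  \sum_(i < m.+1) F i = \sum_(i < m) F (widen_ord (leqnSn m) i).
Proof. by move=> Fmax; rewrite big_ord_recr /= Fmax addr0. Qed.

(* By ( * ), truncation is multiplicative: the quotient map is a morphism. *)
Lemma res_amul u v : res (amul c u v) = amul c (res u) (res v).
Proof.
apply/rowP => k; rewrite !mxE big_ord_recr0; last first.
  by apply: big1 => j _; rewrite cs ?mulr0 //=; have := ltn_ord j; have := ltn_ord k; lia.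
apply: eq_bigr => i _; rewrite big_ord_recr0; last first.
  by rewrite cs ?mulr0 //=; have := ltn_ord i; have := ltn_ord k; lia.
by apply: eq_bigr => j _; rewrite !mxE.
Qed.

Lemma resD u v : res (u + v) = res u + res v.
Proof. by apply/rowP => j; rewrite !mxE. Qed.

Lemma resZ t u : res (t *: u) = t *: res u.
Proof. by apply/rowP => j; rewrite !mxE. Qed.

Lemma res_vec i : res (vec n.+1 i) = vec n i.
Proof. by apply/rowP => j; rewrite !mxE. Qed.

Lemma wid_lift (k : 'I_n) : wid k = lift ord_max k.
Proof. by apply: val_inj; rewrite /= /bump leqNgt ltn_ord. Qed.

Lemma res_surj u : exists w, res w = u.
Proof.
exists (\row_(j < n.+1) if unlift ord_max j is Some k then u 0 k else 0).
by apply/rowP => k; rewrite !mxE wid_lift liftK.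
Qed.

Lemma res_decomp u v : res u = res v -> u = v + (u 0 ord_max - v 0 ord_max) *: en.
Proof.
move=> uv; apply/rowP => j; rewrite !mxE; case: (unliftP ord_max j) => [k ->|->].
  have := congr1 (fun w : 'rV_n => w 0 k) uv; rewrite !mxE wid_lift => ->.
  by rewrite eqSS -wid_lift /= ltn_eqF ?mulr0 ?addr0.
by rewrite eqxx mulr1 addrC subrK.
Qed.

Lemma last_row_line A t : en *m A = t *: en -> forall j : 'I_n, A ord_max (wid j) = 0.
Proof.
move=> At j; have := congr1 (fun w : 'rV_n.+1 => w 0 (wid j)) At.
by rewrite /= (vec_mul ord_max) !mxE /= eqSS ltn_eqF ?mulr0.
Qed.

Lemma res_mul A t : en *m A = t *: en -> forall w, res (w *m A) = res w *m blk A.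
Proof.
move=> /last_row_line Alast w; apply/rowP => j.
by rewrite !mxE big_ord_recr0 ?Alast ?mulr0 //; apply: eq_bigr => k _; rewrite !mxE.
Qed.

Lemma blk_mul A B t : en *m B = t *: en -> blk (A *m B) = blk A *m blk B.
Proof.
move=> /last_row_line Blast; apply/matrixP => i j.
by rewrite !mxE big_ord_recr0 ?Blast ?mulr0 //; apply: eq_bigr => k _; rewrite !mxE.
Qed.

Lemma blk1 : blk 1%:M = 1%:M.
Proof. by apply/matrixP => i j; rewrite !mxE. Qed.

Lemma blk_aut A t s : is_aut c A ->
  en *m A = t *: en -> en *m invmx A = s *: en -> is_aut c (blk A).
Proof.
move=> [Aunit Amul] At Ai; split.
  have blkV : blk A *m blk (invmx A) = 1%:M by rewrite -(blk_mul _ Ai) mulmxV ?blk1.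
  exact: (mulmx1_unit blkV).1.
move=> u v; have [u' <-] := res_surj u; have [v' <-] := res_surj v.
by rewrite -!(res_mul At) -res_amul Amul (res_mul At) res_amul.
Qed.

Lemma lift_image A t i w : en *m A = t *: en ->
  vec n i *m blk A = res w -> exists y, vec n.+1 i *m A = w + y *: en.
Proof. by move=> At iA; eexists; apply: res_decomp; rewrite (res_mul At) res_vec. Qed.
End Quotient.

Section Extension.
Variables (n : nat) (c : nat -> nat -> nat -> C).
Hypothesis n_ge2 : (2 <= n)%N.
Hypothesis cs : cond_star n.+1 c.
Hypothesis Ann_line : forall a : 'rV[C]_n.+1,
  in_Ann c a <-> exists t : C, a = t *: vec n.+1 n.+1.
Hypothesis e1en : amul c (vec n.+1 1) (vec n.+1 n) = 0.
Hypothesis sq : forall i : nat, (1 <= i)%N -> (i <= n)%N ->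
  amul c (vec n.+1 i) (vec n.+1 i) = vec n.+1 i.+1.

Hypothesis quot_aut : forall B : 'M[C]_n, is_aut c B <->
  exists x : C, vec n 1 *m B = vec n 1 + x *: vec n n /\
    forall i : nat, (2 <= i)%N -> (i <= n)%N -> vec n i *m B = vec n i.

Local Notation e := (vec n.+1).
Local Notation en := (vec n.+1 n.+1).

Lemma en_Ann : in_Ann c en.
Proof. by apply/Ann_line; exists 1; rewrite scale1r. Qed.

Lemma en_AnnZ t : in_Ann c (t *: en).
Proof. exact: in_AnnZ en_Ann. Qed.

Lemma aut_stabilises_Ann A : is_aut c A -> exists t, en *m A = t *: en.
Proof. by move=> Aaut; apply/Ann_line; apply: aut_Ann Aaut en_Ann. Qed.

Lemma aut_mod_Ann A :
  is_aut c A ->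
  exists x y, e 1 *m A = e 1 + x *: e n + y *: en /\
    forall k, (2 <= k <= n)%N -> exists z, e k *m A = e k + z *: en.
Proof.
move=> Aaut; have [t At] := aut_stabilises_Ann Aaut.
have [s As] := aut_stabilises_Ann (aut_inv Aaut).
have [x [e1B ekB]] := (quot_aut (blk A)).1 (blk_aut cs Aaut At As).
have e1B' : vec n 1 *m blk A = res (e 1 + x *: e n) by rewrite resD resZ !res_vec.
have [y e1A] := lift_image At e1B'.
exists x, y; split => // k /andP [k2 kn].
by apply: (lift_image At); rewrite res_vec ekB.
Qed.

(* Applying the automorphism to e_1 e_n = 0 kills the e_n-component of e_1. *)
Lemma shift_vanishes A x y z : is_aut c A ->
  e 1 *m A = e 1 + x *: e n + y *: en -> e n *m A = e n + z *: en -> x = 0.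
Proof.
case=> _ Amul e1A enA; have := Amul (e 1) (e n).
rewrite e1en mul0mx e1A enA (amul_Ann_shift _ _ (en_AnnZ y) (en_AnnZ z)).
rewrite amulDl amulZl e1en sq ?(ltnW n_ge2) // add0r.
by move/(congr1 (fun w : 'rV_n.+1 => w 0 ord_max)); rewrite !mxE /= eqxx mulr1.
Qed.

(* If e_k is fixed modulo e_(n+1), then e_(k+1) = e_k^2 is fixed. *)
Lemma aut_squares A k y : is_aut c A -> (1 <= k <= n)%N ->
  e k *m A = e k + y *: en -> e k.+1 *m A = e k.+1.
Proof.
case=> _ Amul /andP [k1 kn] ekA.
by rewrite -sq // -Amul ekA (amul_Ann_shift _ _ (en_AnnZ y) (en_AnnZ y)).
Qed.

Lemma aut_forward A :
  is_aut c A ->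
  exists x, e 1 *m A = e 1 + x *: en /\
    forall i, (2 <= i <= n.+1)%N -> e i *m A = e i.
Proof.
move=> Aaut; have [x [y [e1A ekA]]] := aut_mod_Ann Aaut.
have [z enA] := ekA n ltac:(by rewrite n_ge2 leqnn).
have x0 := shift_vanishes Aaut e1A enA.
rewrite x0 scale0r addr0 in e1A.
exists y; split => // -[|k] // /andP [k1 kn].
have [w ekA'] : exists w, e k *m A = e k + w *: en.
  by case: (ltnP 1 k) => k2; [apply: ekA; lia | exists y; have -> : k = 1%N by lia].
by apply: (aut_squares Aaut _ ekA'); lia.
Qed.

Lemma aut_backward A x : e 1 *m A = e 1 + x *: en ->
  (forall i, (2 <= i <= n.+1)%N -> e i *m A = e i) -> is_aut c A.
Proof.
move=> e1A eiA; apply: (shear_aut cs (en_AnnZ x)).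
  by rewrite !mxE eqSS eq_sym gtn_eqF ?mulr0 // (ltnW n_ge2).
move=> w; rewrite (shear_action (a := x *: en)) //; first by rewrite -vecE.
move=> i i0; rewrite -vecE eiA //; have := ltn_ord i.
by move: i0; rewrite -val_eqE /=; lia.
Qed.
End Extension.

Theorem mainTheorem10 (n : nat) (c : nat -> nat -> nat -> C) :
  (2 <= n)%N ->
  cond_star n.+1 c ->
  (forall a : 'rV[C]_n.+1, in_Ann c a <-> exists t : C, a = t *: vec n.+1 n.+1) ->
  amul c (vec n.+1 1) (vec n.+1 n) = 0 ->
  (forall i : nat, (1 <= i)%N -> (i <= n)%N -> amul c (vec n.+1 i) (vec n.+1 i) = vec n.+1 i.+1) ->
  (* automorphisms of the quotient A/<e_{n+1}>, whose structure constants are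
     those of c with indices restricted to 1..n *)
  (forall B : 'M[C]_n, is_aut c B <->
     exists x : C, vec n 1 *m B = vec n 1 + x *: vec n n /\
       forall i : nat, (2 <= i)%N -> (i <= n)%N -> vec n i *m B = vec n i) ->
  forall A : 'M[C]_n.+1, is_aut c A <->
     exists x : C, vec n.+1 1 *m A = vec n.+1 1 + x *: vec n.+1 n.+1 /\
       forall i : nat, (2 <= i <= n.+1)%N -> vec n.+1 i *m A = vec n.+1 i.
Proof.
move=> n_ge2 cs Ann_line e1en sq quot_aut A; split.
  exact: aut_forward.
by case=> x [e1A eiA]; apply: aut_backward e1A eiA.
Qed.
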